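(* ($I\Sigma_1$) Let $X\subseteq\mathbb{N}$ be finite, $\omega^{n+3}$-large and $\omega^3$-sparse, and let $c\in\mathbb{N}$ with $c\le\min X$. Then $X$ admits an $(\omega^n,c)$-grouping for $\min X$ colors.
   Context: $\alpha$-largeness for $\alpha<\omega^\omega$: writing ordinals in Cantor normal form, $0[m]=0$, $(\beta+1)[m]=\beta$, $(\beta+\omega^n)[m]=\beta+\omega^{n-1}\cdot m$ for $n\ge1$; a finite $\{x_0<\dots<x_{\ell-1}\}$ is $\alpha$-large if $\alpha[x_0]\cdots[x_{\ell-1}]=0$ (so for a natural number $c$, $c$-large means having at least $c$ elements). $X$ is \emph{$\alpha$-sparse} if $\min X>3$ and for all $x<y$ in $X$ the interval $[x,y)$ is $\alpha$-large. For $P:[X]^2\to\{0,\dots,\min X-1\}$, a finite sequence $\langle F_i\subseteq X:i<l\rangle$ is an \emph{$(\alpha,\beta)$-grouping for $P$} if $\max F_i<\min F_j$ for $i<j$, each $F_i$ is $\alpha$-large, $\{\max F_i:i<l\}$ is $\beta$-large, and $P(x,y)=P(x',y')$ whenever $i<j<l$, $x,x'\in F_i$, $y,y'\in F_j$. $X$ \emph{admits an $(\alpha,\beta)$-grouping for $k$ colors} if every $P:[X]^2\to\{0,\dots,k-1\}$ has one. *)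

From mathcomp Require Import all_boot.
Set Implicit Arguments. Unset Strict Implicit. Unset Printing Implicit Defensive.

(* Ordinals below omega^omega in Cantor normal form
     alpha = omega^(e_k) + ... + omega^(e_1),  e_k >= ... >= e_1,
   are represented by the list of exponents in REVERSED order
   [:: e_1; ...; e_k] (smallest, i.e. last CNF term, first). *)
Definition cnf := seq nat.

Definition cnf_zero : cnf := [::].
Definition omega_pow (n : nat) : cnf := [:: n].
Definition nat_cnf (c : nat) : cnf := nseq c 0.

(* Fundamental sequence:
   0[m] = 0, (beta+1)[m] = beta, (beta + omega^(n+1))[m] = beta + omega^n * m. *)
Definition fund (a : cnf) (m : nat) : cnf :=
  match a with
  | [::] => [::]
  | 0 :: b => b
  | e.+1 :: b => nseq m e ++ b
  end.

Definition fin_set (X : seq nat) : bool := sorted ltn X.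
Definition minX (X : seq nat) : nat := head 0 X.
Definition maxX (X : seq nat) : nat := last 0 X.

Definition large (a : cnf) (X : seq nat) : bool :=
  foldl fund a X == cnf_zero.

Definition interval_co (x y : nat) : seq nat := iota x (y - x).

Definition sparse (a : cnf) (X : seq nat) : bool :=
  (3 < minX X) &&
  all (fun x => all (fun y => (x < y) ==> large a (interval_co x y)) X) X.

Definition grouping (a b : cnf) (X : seq nat) (P : nat -> nat -> nat)
    (F : seq (seq nat)) : Prop :=
  [/\ (forall i, i < size F ->
         [/\ fin_set (nth [::] F i), {subset nth [::] F i <= X} &
             large a (nth [::] F i)]),
      (forall i j, i < j -> j < size F ->
         maxX (nth [::] F i) < minX (nth [::] F j)),
      large b (map maxX F) &
      (forall i j, i < j -> j < size F ->
         forall x x' y y', x \in nth [::] F i -> x' \in nth [::] F i ->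
           y \in nth [::] F j -> y' \in nth [::] F j -> P x y = P x' y')].

Definition admits_grouping (a b : cnf) (k : nat) (X : seq nat) : Prop :=
  forall P : nat -> nat -> nat,
    (forall x y, x \in X -> y \in X -> x < y -> P x y < k) ->
    exists F : seq (seq nat), grouping a b X P F.

(* Write X = m :: X'.  Then X' is ω^(n+2)·m-large, so it contains c consecutive
   ω^(n+2)-large pieces Z = z :: Z'.  In each piece we find a block that is
   ω^n·m^m-large and end-homogeneous: P h _ is constant on it for every h before
   Z.  This uses the pigeonhole principle for k-coloured ω^e·(k·t)-large sets
   (proved with natural sums), applied to the m^|pre| vectors (P h y)_h; there are
   at most z of them because ω^3-sparseness gives z ≥ p^(p+1) for the element p
   just before z.  Finally each block B is thinned, by c more pigeonholes with m
   colours, so that P _ (min B') is constant on it for every later block B';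
   end-homogeneity of B' then makes P constant on B × B'. *)

From mathcomp Require Import all_boot zify.
Set Implicit Arguments. Unset Strict Implicit. Unset Printing Implicit Defensive.

Lemma foldl_fund0 s : foldl fund [::] s = [::].
Proof. by elim: s. Qed.

Lemma large0 s : large [::] s.
Proof. by rewrite /large foldl_fund0. Qed.

Lemma large_nil a : large a [::] = (a == [::]).
Proof. by []. Qed.

Lemma large_cons a x s : large a (x :: s) = large (fund a x) s.
Proof. by []. Qed.

Lemma large_catr a s t : large a s -> large a (s ++ t).
Proof. by rewrite /large foldl_cat => /eqP ->; rewrite foldl_fund0. Qed.

Lemma fund_cat a b x : a != [::] -> fund (a ++ b) x = fund a x ++ b.
Proof. by case: a => [|[|e] a] //= _; rewrite catA. Qed.

Lemma fund_cons e a x : fund (e :: a) x = fund [:: e] x ++ a.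
Proof. by rewrite -fund_cat. Qed.

(* In the reversed Cantor normal form, [a ++ b] is the ordinal [b + a]. *)
Lemma large_cat_split a b s : large (a ++ b) s ->
  exists s1 s2, [/\ s = s1 ++ s2, large a s1 & large b s2].
Proof.
elim: s a => [|x s IHs] a.
  by case: a => //=; rewrite large_nil => /eqP ->; exists [::], [::].
have [-> Hb|a0] := eqVneq a [::]; first by exists [::], (x :: s).
rewrite large_cons fund_cat // => /IHs [s1 [s2 [-> Ha Hb]]].
by exists (x :: s1), s2.
Qed.

Lemma large_catl a b s : large (a ++ b) s -> large a s.
Proof. by case/large_cat_split=> s1 [s2 [-> Ha _]]; exact: large_catr. Qed.

Lemma large_nseq_leq k k' e s : k <= k' -> large (nseq k' e) s -> large (nseq k e) s.
Proof. by move=> le_kk'; rewrite -(subnKC le_kk') nseqD; exact: large_catl. Qed.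

(* [large_cons_min] is proved by strong induction on [size s]: the inductive step
   applies it to prefixes of [s], directly and through the lemmas of this section. *)
Section ConsMin.

Variable N : nat.
Hypothesis large_cons_min_upto : forall s a x,
  size s <= N -> path ltn x s -> large a s -> large a (x :: s).

Lemma large_prepend_upto u v b :
  sorted ltn (u ++ v) -> size (u ++ v) <= N -> large b v -> large b (u ++ v).
Proof.
elim: u => //= y u IHu Hs Hsz Hb; apply: large_cons_min_upto => //; first by lia.
by apply: IHu => //; [exact: path_sorted Hs | lia].
Qed.

Lemma large_dropl_upto p a s : sorted ltn s -> size s <= N -> large (p ++ a) s -> large a s.
Proof.
move=> Hs Hsz /large_cat_split [s1 [s2 [Es _ Ha]]]; subst s.
exact: large_prepend_upto.
Qed.

Lemma large_cat_upto a b s1 s2 : sorted ltn (s1 ++ s2) -> size (s1 ++ s2) <= N ->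
  large a s1 -> large b s2 -> large (a ++ b) (s1 ++ s2).
Proof.
elim: s1 a => [|y s1 IHs] a /= Hs Hsz Ha Hb; first by move: Ha; rewrite large_nil => /eqP ->.
have [a0|na] := eqVneq a [::]; first by subst a; exact: (large_prepend_upto (u := y :: s1)).
rewrite large_cons fund_cat //; apply: IHs => //; [exact: path_sorted Hs | lia].
Qed.

Lemma large_cons_min_step s a x :
  size s <= N.+1 -> path ltn x s -> large a s -> large a (x :: s).
Proof.
case: s => [|w W] Hsz; first by move=> _; rewrite large_nil => /eqP ->; exact: large0.
have HszW : size W <= N by move: Hsz => /=; lia.
move=> Hp; have /andP [lt_xw HW] : (x < w) && path ltn w W := Hp; clear Hp.
rewrite !large_cons.
have HsW := path_sorted HW.
case: a => [|[|e] g] // Ha; first by rewrite -large_cons; exact: large_cons_min_upto.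
case: x lt_xw => [|x] lt_xw.
  by rewrite -large_cons; apply: large_cons_min_upto => //; exact: large_dropl_upto Ha.
have {Ha} : large ([:: e] ++ nseq w.-1 e ++ g) W by clear -Ha lt_xw; case: w lt_xw Ha.
case/large_cat_split=> W1 [W2 [EW He Hw]]; subst W.
move: HW HszW; rewrite cat_path size_cat => /andP [HW1 _] HszW.
rewrite [fund (e.+1 :: g) _]/= fund_cons; apply: large_cat_upto => //.
- by rewrite -large_cons; apply: large_cons_min_upto => //; lia.
- rewrite -(subnK (_ : x <= w.-1)) ?nseqD -?catA in Hw; last by lia.
  by apply: large_dropl_upto Hw; [case/cat_sorted2: HsW | lia].
Qed.

End ConsMin.

Lemma large_cons_min s a x : path ltn x s -> large a s -> large a (x :: s).
Proof.
elim: (size s) {-2}s (leqnn (size s)) a x => [|N IHN] t Ht a x.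
  by case: t Ht => // _ _; rewrite large_nil => /eqP ->; exact: large0.
by apply: large_cons_min_step Ht => u b y Hu; exact: IHN.
Qed.

Lemma large_dropl p a s : sorted ltn s -> large (p ++ a) s -> large a s.
Proof. by move=> Hs; apply: large_dropl_upto (leqnn _) => // t b x _; exact: large_cons_min. Qed.

Lemma large_cat a b s1 s2 : sorted ltn (s1 ++ s2) ->
  large a s1 -> large b s2 -> large (a ++ b) (s1 ++ s2).
Proof. by move=> Hs; apply: large_cat_upto (leqnn _) => // t c x _; exact: large_cons_min. Qed.

Lemma large_exp_leq e e' s : e <= e' -> sorted ltn s -> large [:: e'] s -> large [:: e] s.
Proof.
move=> + Hs; elim: e' => [|e' IHe']; first by rewrite leqn0 => /eqP ->.
rewrite leq_eqVlt ltnS => /predU1P [-> //|le_ee'] He'; apply: IHe' => //.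
case: s Hs He' => [|w s] // Hs; rewrite large_cons => He'.
case: w Hs He' => [|w] Hs He'; first by rewrite large_cons; case: (e') => *; exact: large0.
have /large_catl : large ([:: e'] ++ nseq w e' ++ [::]) s := He'.
exact: large_cons_min.
Qed.

Lemma large_shift x s y t W : path leq x (rcons s y) -> sorted ltn W ->
  large (rcons s y ++ t) W -> large (x :: s ++ t) W.
Proof.
elim: s x W => [|z s IHs] x W /=.
  rewrite andbT => le_xy HW /(large_cat_split (a := [:: y])) [W1 [W2 [EW H1 H2]]].
  subst W; apply: (large_cat (a := [:: x])) => //.
  by apply: large_exp_leq H1 => //; case/cat_sorted2: HW.
case/andP=> le_xz Hz HW /(large_cat_split (a := [:: z])) [W1 [W2 [EW H1 H2]]].
subst W; have [HW1 HW2] := cat_sorted2 HW.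
by apply: (large_cat (a := [:: x])); [|exact: large_exp_leq H1|exact: IHs].
Qed.

Lemma large_nseq0 k s : large (nseq k 0) s = (k <= size s).
Proof.
elim: s k => [|y s IHs] [|k] //=; first exact: large0.
by rewrite large_cons IHs.
Qed.

Lemma large_iota_cat_split a b s L : large (a ++ b) (iota s L) ->
  exists2 L1, L1 <= L & large a (iota s L1) /\ large b (iota (s + L1) (L - L1)).
Proof.
case/large_cat_split=> s1 [s2 [E H1 H2]].
have le_s1L : size s1 <= L by rewrite -(size_iota s L) E size_cat leq_addr.
exists (size s1) => //; split.
  by move/(congr1 (take (size s1))): E; rewrite take_size_cat // take_iota (minn_idPl le_s1L) => ->.
by move/(congr1 (drop (size s1))): E; rewrite drop_size_cat // drop_iota => ->.
Qed.

Lemma large_omega_mul_iota k s L : large (nseq k 1) (iota s L) -> 2 ^ k * s <= s + L.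
Proof.
elim: k s L => [|k IHk] s L; first by rewrite mul1n leq_addr.
rewrite [nseq _ _]/= -cat1s => /large_iota_cat_split [L1 le_L1L [H1 /IHk]].
case: L1 le_L1L H1 => [|L1] //= le_L1L.
rewrite large_cons [fund _ _]/= cats0 large_nseq0 size_iota => H1.
rewrite expnS -mulnA; move: (2 ^ k) => q; nia.
Qed.

Lemma large_omega2_iota s L : large [:: 2] (iota s L) -> 2 ^ s * s.+1 <= s + L.
Proof.
case: L => [|L] //; rewrite [iota s _]/= large_cons [fund _ _]/= cats0.
by move=> /large_omega_mul_iota; lia.
Qed.

Lemma large_omega3_iota p L : 2 <= p -> large [:: 3] (iota p L) -> p ^ p.+1 <= p + L.
Proof.
case: L => [|L] // le2p; rewrite [iota p _]/= large_cons [fund _ _]/= cats0.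
have -> : nseq p 2 = ([:: 2] ++ [:: 2]) ++ nseq (p - 2) 2 by rewrite -{1}(subnKC le2p).
move=> /large_catl /large_iota_cat_split [L1 le_L1L [/large_omega2_iota H1]].
move=> /large_omega2_iota H2.
set s := p.+1 + L1 in H1 H2.
have le_p2 : p ^ p.+1 <= 2 ^ (p * p.+1) by rewrite expnM leq_exp2r // ltnW // ltn_expl.
have le_ps : p * p.+1 <= s.
  apply: leq_trans H1; rewrite leq_mul //.
  by apply: ltnW; apply: ltn_trans (ltn_expl p.+1 (isT : 1 < 2)).
apply: leq_trans le_p2 _; apply: leq_trans (leq_pexp2l (isT : 0 < 2) le_ps) _.
apply: leq_trans (leq_pmulr _ (ltn0Sn s)) _; apply: leq_trans H2 _; lia.
Qed.

Definition nsum (a b : cnf) : cnf := sort leq (a ++ b).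

Lemma sorted_nsum a b : sorted leq (nsum a b).
Proof. exact: (sort_sorted leq_total). Qed.

Lemma nsum_eq a b c : sorted leq c -> perm_eq c (a ++ b) -> nsum a b = c.
Proof.
move=> Hc Hp; apply: (sorted_eq leq_trans anti_leq) => //; first exact: sorted_nsum.
by rewrite perm_sort perm_sym.
Qed.

Lemma nsumC a b : nsum a b = nsum b a.
Proof. by apply: nsum_eq; rewrite ?sorted_nsum // perm_sort perm_catC. Qed.

Lemma path_leq_nseq k e : path leq e (nseq k e).
Proof. by elim: k => //= k ->; rewrite leqnn. Qed.

Lemma sorted_nseq k e : sorted leq (nseq k e).
Proof. by case: k => //= k; exact: path_leq_nseq. Qed.

Lemma nsum_nseq k1 k2 e : nsum (nseq k1 e) (nseq k2 e) = nseq (k1 + k2) e.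
Proof. by apply: nsum_eq; rewrite ?sorted_nseq // nseqD. Qed.

Lemma path_fund a0 a x : sorted leq (a0 :: a) -> path leq a0.-1 (fund (a0 :: a) x).
Proof.
rewrite /= (path_sortedE leq_trans) => /andP [Ha0 Ha].
case: a0 Ha0 => [|e] Ha0 /=; first by rewrite (path_sortedE leq_trans) Ha andbT; exact/allP.
rewrite cat_path path_leq_nseq (_ : last e (nseq x e) = e); last by elim: x.
rewrite (path_sortedE leq_trans) Ha andbT.
by apply/allP=> f /(allP Ha0); exact: ltnW.
Qed.

Lemma sorted_fund a x : sorted leq a -> sorted leq (fund a x).
Proof. by case: a => // a0 a /(path_fund x) /path_sorted. Qed.

Lemma nsum_split k p a b : path leq k.-1 (p ++ a) -> all (leq^~ k) p -> sorted leq b ->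
  nsum (p ++ a) b = [seq e <- b | e < k] ++ p ++ nsum a [seq e <- b | k <= e].
Proof.
set lo := filter _ b; set hi := filter _ b => Hpa Hp Hb.
have Pb : perm_eq b (lo ++ hi).
  rewrite perm_sym /hi (eq_filter (a2 := predC (fun e => e < k))) ?perm_filterC // => e.
  by rewrite /= -leqNgt.
rewrite (path_sortedE leq_trans) all_cat (sorted_pairwise leq_trans) pairwise_cat in Hpa.
case/and4P: Hpa => /andP [Hkp Hka] Hpa Sp _.
apply: nsum_eq.
  rewrite (sorted_pairwise leq_trans) !pairwise_cat allrel_catr -!(sorted_pairwise leq_trans).
  have Slo : sorted leq lo := sorted_filter leq_trans _ Hb.
  rewrite sorted_nsum Slo (sorted_pairwise leq_trans) Sp !andbT.
  have lo_lt e : e \in lo -> e < k by rewrite mem_filter => /andP [].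
  have hi_ge e : e \in hi -> k <= e by rewrite mem_filter => /andP [].
  apply/and3P; split=> //; first (apply/andP; split).
  - by apply/allrelP=> e f /lo_lt lt_ek /(allP Hkp); lia.
  - apply/allrelP=> e f /lo_lt lt_ek; rewrite mem_sort mem_cat => /orP [/(allP Hka)|/hi_ge]; lia.
  - apply/allrelP=> e f ep; rewrite mem_sort mem_cat => /orP [|/hi_ge].
      exact: (allrelP Hpa).
    exact: leq_trans (allP Hp e ep).
by apply/permP=> q; rewrite !count_cat count_sort count_cat (permP Pb) count_cat; lia.
Qed.

Lemma large_fund_lt s e x W : sorted leq s -> all (leq^~ e) s -> s != [::] ->
  path ltn x W -> large (fund s x ++ [:: e.+1]) W -> large (s ++ nseq x e) W.
Proof.
case: s => [|b0 s] // Ss Hse _ HW; have SW := path_sorted HW.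
rewrite fund_cons => /large_cat_split [V [[|w T] [EW HV]]] //; subst W.
rewrite large_cons [fund _ _]/= cats0 => HT; have [SV ST] := cat_sorted2 SW.
have lt_xw : x < w.
  by apply: (allP (order_path_min ltn_trans HW)); rewrite mem_cat mem_head orbT.
have Hs : large s V := large_dropl SV HV.
have Hw : large (nseq w e) (w :: T) := large_cons_min ST HT.
(* [x < w] leaves room to shift [s] up by one place, absorbing its least term [b0]. *)
move: (large_cat SW Hs Hw); rewrite -{1}(subnKC lt_xw) nseqD catA => /large_catl.
rewrite [nseq _.+1 _]/= -cat_rcons; apply: large_shift (path_sorted HW).
by rewrite rcons_path; apply/andP; split; [exact: Ss | apply: (allP Hse); exact: mem_last].
Qed.

(* The delicate case is when [b] has exponents below the least exponent [a0] of
   [a]: then [(a ⊕ b)[x]] lowers a term of [b], while [a[x] ⊕ b] lowers [ω^a0]. *)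
Lemma large_fund_nsum a b x W : sorted leq a -> sorted leq b -> a != [::] -> path ltn x W ->
  large (fund (nsum a b) x) W -> large (nsum (fund a x) b) W.
Proof.
case: a => [|a0 a] // Sa Sb _ HW; have SW := path_sorted HW.
have Hfa0 : all (leq^~ a0) (fund [:: a0] x).
  by case: a0 {Sa} => // e; rewrite [fund _ _]/= cats0 all_nseq /= leqnSn orbT.
rewrite -cat1s (nsum_split (k := a0)) //; last 2 first.
- by rewrite cat1s; apply/andP; split; [exact: leq_pred | exact: Sa].
- by rewrite all_seq1.
rewrite fund_cons (nsum_split (k := a0)) //; last by rewrite -fund_cons path_fund.
have lo_lt f : f \in [seq e <- b | e < a0] -> f < a0 by rewrite mem_filter => /andP [].
have Slo : sorted leq [seq e <- b | e < a0] := sorted_filter leq_trans _ Sb.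
move: (filter _ b) (nsum a _) lo_lt Slo => lo M lo_lt Slo.
have [->|nlo] := eqVneq lo [::]; first by rewrite cat0s cat1s fund_cons.
have lt0a0 : 0 < a0.
  by case: lo nlo lo_lt {Slo} => // f lo' _ /(_ f (mem_head _ _)); exact: leq_ltn_trans.
rewrite fund_cat // catA => /large_cat_split [W1 [W2 [EW H1 H2]]]; subst W.
move: HW; rewrite cat_path => /andP [HW1 _].
rewrite -{1}(prednK lt0a0) in H1.
rewrite -{1}(prednK lt0a0) [fund _ _]/= cats0.
rewrite catA; apply: large_cat H2 => //; apply: large_fund_lt HW1 H1 => //.
by apply/allP=> f /lo_lt; lia.
Qed.

Lemma large_nsum_partition (p : pred nat) a b X : sorted ltn X ->
  sorted leq a -> sorted leq b -> large (nsum a b) X ->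
  large a (filter p X) \/ large b (filter (predC p) X).
Proof.
elim: X a b => [|x X IHX] a b HX Sa Sb.
  rewrite !large_nil => /eqP /(congr1 size); rewrite size_sort size_cat.
  by case: a {Sa} => [|? ?] //; left.
have [->|na] := eqVneq a [::]; first by left; exact: large0.
have [->|nb] := eqVneq b [::]; first by right; exact: large0.
have SX := path_sorted HX; rewrite large_cons /=; case: (p x) => H.
- have [Ha|Hb] := IHX _ _ SX (sorted_fund x Sa) Sb (large_fund_nsum Sa Sb na HX H).
    by left; rewrite large_cons.
  by right.
- rewrite nsumC in H; have := large_fund_nsum Sb Sa nb HX H; rewrite nsumC => H'.
  have [Ha|Hb] := IHX _ _ SX Sa (sorted_fund x Sb) H'.
    by left.
  by right; rewrite large_cons.
Qed.

Lemma large_pigeonhole (col : nat -> nat) k t e X : 0 < k -> sorted ltn X ->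
  (forall x, x \in X -> col x < k) -> large (nseq (k * t) e) X ->
  exists2 c, c < k & large (nseq t e) [seq x <- X | col x == c].
Proof.
case: k => // k _; elim: k X => [|k IHk] X HX Hcol.
  rewrite mul1n => HL; exists 0 => //; congr large: HL; apply/esym/all_filterP/allP.
  by move=> x /Hcol; rewrite ltnS leqn0.
rewrite mulSn -nsum_nseq.
case/(large_nsum_partition (fun x => col x == k.+1) HX (sorted_nseq _ _) (sorted_nseq _ _)).
  by exists k.+1.
have Hcol' x : x \in [seq x <- X | col x != k.+1] -> col x < k.+1.
  by rewrite mem_filter => /andP [/eqP ne /Hcol]; lia.
case/(IHk _ (sorted_filter ltn_trans _ HX) Hcol') => c lt_ck Hc; exists c; first exact: ltnW.
rewrite -filter_predI (@eq_filter _ _ (fun x => col x == c)) in Hc => // x /=.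
by case: eqP => // ->; rewrite neq_ltn lt_ck.
Qed.

Definition homogeneous_over (f : nat -> nat -> nat) (H Y : seq nat) : Prop :=
  forall h, h \in H -> {in Y &, forall y y', f h y = f h y'}.

Lemma homogeneous_subseq (f : nat -> nat -> nat) k H t e Y : 0 < k -> sorted ltn Y ->
  (forall h y, h \in H -> y \in Y -> f h y < k) -> large (nseq (k ^ size H * t) e) Y ->
  exists Y', [/\ subseq Y' Y, large (nseq t e) Y' & homogeneous_over f H Y'].
Proof.
move=> k_gt0; elim: H Y => [|h H IHH] Y HY Hf HL.
  by exists Y; rewrite mul1n in HL; split.
rewrite /= expnS -mulnA in HL.
have [c _ Hc] := large_pigeonhole k_gt0 HY (Hf h ^~ (mem_head h H)) HL.
have Hf' h' y : h' \in H -> y \in [seq y <- Y | f h y == c] -> f h' y < k.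
  by rewrite mem_filter => Hh' /andP [_ Hy]; apply: Hf; rewrite ?inE ?Hh' ?orbT.
have [Y' [sub HL' Hhom]] := IHH _ (sorted_filter ltn_trans _ HY) Hf' Hc.
exists Y'; split=> //; first exact: subseq_trans sub (filter_subseq _ _).
move=> h'; rewrite inE => /predU1P [->|/Hhom //] y y' /(mem_subseq sub) + /(mem_subseq sub).
by rewrite !mem_filter => /andP [/eqP -> _] /andP [/eqP -> _].
Qed.

Lemma head_mem (s : seq nat) x : x \in s -> head 0 s \in s.
Proof. by case: s => // y s _; exact: mem_head. Qed.

Lemma last_mem (s : seq nat) x : x \in s -> last 0 s \in s.
Proof. by case: s => // y s _; exact: mem_last. Qed.

Lemma path_ltn_size_last x s : path ltn x s -> x + size s <= last x s.
Proof.
elim: s x => [|y s IHs] x /=; first by rewrite addn0.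
by case/andP=> lt_xy /IHs; lia.
Qed.

Definition monochromatic (P : nat -> nat -> nat) (B B' : seq nat) : bool :=
  constant [seq P x y | x <- B, y <- B'].

Lemma monochromaticP P B B' :
  reflect (exists c, forall x y, x \in B -> y \in B' -> P x y = c) (monochromatic P B B').
Proof.
apply: (iffP idP).
  case/(constantP 0)=> c Ec; exists c => x y Hx Hy; have := allpairs_f P Hx Hy.
  by rewrite Ec mem_nseq => /andP [_ /eqP].
case=> c Hc; apply: (@all_pred1_constant _ c); apply/allP => _ /allpairsP [[x y] [Hx Hy ->]].
exact/eqP/Hc.
Qed.

Lemma grouping_of_blocks n c X P Bs :
  (forall B, B \in Bs -> [/\ sorted ltn B, {subset B <= X} & large [:: n] B]) ->
  pairwise (fun B B' => allrel ltn B B' && monochromatic P B B') Bs -> c <= size Bs ->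
  grouping (omega_pow n) (nat_cnf c) X P Bs.
Proof.
move=> HBs /(pairwiseP [::]) Hpw le_c.
have HB i : i < size Bs -> [/\ sorted ltn (nth [::] Bs i), {subset nth [::] Bs i <= X} &
                               large [:: n] (nth [::] Bs i)].
  by move=> Hi; exact: HBs (mem_nth [::] Hi).
have Hb0 i : i < size Bs -> exists b, b \in nth [::] Bs i.
  by case/HB; case: (nth _ _ _) => // b B _ _ _; exists b; exact: mem_head.
split.
- by move=> i /HB [].
- move=> i j lt_ij lt_j; have /andP [Hlt _] := Hpw i j (ltn_trans lt_ij lt_j) lt_j lt_ij.
  have [x Hx] := Hb0 i (ltn_trans lt_ij lt_j); have [y Hy] := Hb0 j lt_j.
  exact: (allrelP Hlt) (last_mem Hx) (head_mem Hy).
- by rewrite /nat_cnf large_nseq0 size_map.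
- move=> i j lt_ij lt_j x x' y y' Hx Hx' Hy Hy'.
  have /andP [_ /monochromaticP [col Hcol]] := Hpw i j (ltn_trans lt_ij lt_j) lt_j lt_ij.
  by rewrite !Hcol.
Qed.

Section Grouping.

Variables (n m : nat) (P : nat -> nat -> nat) (X : seq nat).
Hypotheses (m_gt1 : 1 < m) (m_le : forall x, x \in X -> m <= x).
Hypothesis pow_le : forall x y, x \in X -> y \in X -> x < y -> x ^ x.+1 <= y.
Hypothesis P_lt : forall x y, x \in X -> y \in X -> x < y -> P x y < m.

Lemma end_homogeneous_block pre Z : pre != [::] -> sorted ltn (pre ++ Z) ->
  {subset pre ++ Z <= X} -> large [:: n.+2] Z ->
  exists C, [/\ subseq C Z, large (nseq (m ^ m) n) C & homogeneous_over P pre C].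
Proof.
case: pre => [|h0 pre] // _; case: Z => [|z Z] // Hs HX; rewrite large_cons [fund _ _]/= cats0 => HZ.
have Hs' := Hs; rewrite (sorted_pairwise ltn_trans) pairwise_cat in Hs'.
case/and3P: Hs' => Hlt Spre SzZ; rewrite -!(sorted_pairwise ltn_trans) in Spre SzZ.
have Hz := order_path_min ltn_trans SzZ; have SZ := path_sorted SzZ.
set p := last h0 pre.
have inX x : x \in (h0 :: pre) ++ z :: Z -> x \in X := HX x.
have pX : p \in X by apply: inX; rewrite mem_cat mem_last.
have zX : z \in X by apply: inX; rewrite mem_cat mem_head orbT.
have lt_pz : p < z := allrelP Hlt _ _ (mem_last h0 pre) (mem_head z Z).
(* Sparseness makes [z] large enough to pay for all colour vectors on [h0 :: pre]. *)
have size_pre : size (h0 :: pre) <= p.+1 by have := path_ltn_size_last Spre; rewrite /= -/p; lia.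
have z_ge i : i <= p.+1 -> m ^ i <= z.
  move=> le_ip; apply: leq_trans (pow_le pX zX lt_pz).
  apply: leq_trans (leq_pexp2l (ltnW m_gt1) le_ip) _.
  by rewrite leq_exp2r // m_le.
have HC0 : large (nseq (m ^ size (h0 :: pre) * 1) n.+1) Z.
  by apply: large_nseq_leq HZ; rewrite muln1 z_ge.
have Pcol h y : h \in h0 :: pre -> y \in Z -> P h y < m.
  move=> Hh Hy; apply: P_lt; rewrite ?inX // ?mem_cat ?Hh ?inE ?Hy ?orbT //.
  by apply: (allrelP Hlt) Hh _; rewrite inE Hy orbT.
have [[|c0 C] [subC0 + homC0]] := homogeneous_subseq (ltnW m_gt1) SZ Pcol HC0 => //.
rewrite large_cons [fund _ _]/= cats0 => HC.
exists C; split.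
- by apply: subseq_trans (subseq_cons C c0) _; apply: subseq_trans subC0 (subseq_cons Z z).
- apply: large_nseq_leq HC; apply: (@leq_trans z); first by apply: z_ge; have := m_le pX; lia.
  by apply/ltnW/(allP Hz)/(mem_subseq subC0); exact: mem_head.
- by move=> h Hh y y' Hy Hy'; apply: homC0; rewrite ?inE ?Hy ?Hy' ?orbT.
Qed.

Lemma refine_block C H : sorted ltn C -> {subset C <= X} -> {subset H <= X} ->
  allrel ltn C H -> size H <= m -> large (nseq (m ^ m) n) C ->
  exists D, [/\ subseq D C, large [:: n] D & homogeneous_over (fun h x => P x h) H D].
Proof.
move=> SC CX HX ltCH le_Hm HC.
apply: (homogeneous_subseq (t := 1) (e := n) (ltnW m_gt1) SC).
- by move=> h x Hh Hx; apply: P_lt; [exact: CX | exact: HX | exact: (allrelP ltCH)].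
- by apply: large_nseq_leq HC; rewrite muln1 leq_pexp2l // ltnW.
Qed.

Lemma blocks_exist j pre R : pre != [::] -> sorted ltn (pre ++ R) ->
  {subset pre ++ R <= X} -> j <= m -> large (nseq j n.+2) R ->
  exists Bs, [/\ size Bs = j,
    forall B, B \in Bs ->
      [/\ sorted ltn B, {subset B <= R}, large [:: n] B & homogeneous_over P pre B] &
    pairwise (fun B B' => allrel ltn B B' && monochromatic P B B') Bs].
Proof.
elim: j pre R => [|j IHj] pre R npre Hs HX le_jm; first by exists [::].
rewrite [nseq _ _]/= -cat1s => /large_cat_split [Z [R' [ER HZ HR']]]; subst R.
rewrite catA in Hs HX; have [SpZ _] := cat_sorted2 Hs; have [_ SZ] := cat_sorted2 SpZ.
have ltZR' : allrel ltn Z R'.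
  by move: Hs; rewrite (sorted_pairwise ltn_trans) pairwise_cat allrel_catl => /andP [/andP []].
have pZX : {subset pre ++ Z <= X} by move=> x Hx; apply: HX; rewrite mem_cat Hx.
have R'X : {subset R' <= X} by move=> x Hx; apply: HX; rewrite mem_cat Hx orbT.
have [C [subC HC homC]] := end_homogeneous_block npre SpZ pZX HZ.
have npZ : pre ++ Z != [::] by case: (pre) npre.
have [Bs [sizeBs HBs pwBs]] := IHj (pre ++ Z) R' npZ Hs HX (ltnW le_jm) HR'.
have CZ : {subset C <= Z} := mem_subseq subC.
have head_in B : B \in Bs -> head 0 B \in B.
  by case/HBs=> _ _ + _; case: B => // b B _; exact: mem_head.
have headsR' : {subset map (head 0) Bs <= R'}.
  by move=> _ /mapP [B HB ->]; have [_ subB _ _] := HBs B HB; exact/subB/head_in.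
have SC : sorted ltn C := subseq_sorted ltn_trans subC SZ.
have ltCh : allrel ltn C (map (head 0) Bs).
  by apply/allrelP=> x h /CZ Hx /headsR' Hh; exact: (allrelP ltZR').
have [D [subD HD homD]] : exists D, [/\ subseq D C, large [:: n] D &
                                     homogeneous_over (fun h x => P x h) (map (head 0) Bs) D].
  apply: refine_block SC _ _ ltCh _ HC; last by rewrite size_map sizeBs ltnW.
    by move=> x /CZ Hx; apply: pZX; rewrite mem_cat Hx orbT.
  by move=> x /headsR'; exact: R'X.
have DC : {subset D <= C} := mem_subseq subD.
exists (D :: Bs); split=> [|B|]; first by rewrite /= sizeBs.
  rewrite inE => /predU1P [->|/HBs [SB subB HB homB]]; split=> //.
  - exact: (subseq_sorted ltn_trans subD SC).
  - by move=> x /DC /CZ Hx; rewrite mem_cat Hx.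
  - by move=> h Hh y y' /DC Hy /DC Hy'; exact: homC.
  - by move=> x /subB Hx; rewrite mem_cat Hx orbT.
  - by move=> h Hh; apply: homB; rewrite mem_cat Hh.
rewrite pairwise_cons pwBs andbT; apply/allP=> B HB; have [_ subB _ homB] := HBs B HB.
apply/andP; split; first by apply/allrelP=> x y /DC /CZ Hx /subB Hy; exact: (allrelP ltZR').
apply/monochromaticP; exists (P (head 0 D) (head 0 B)) => x y Hx Hy.
rewrite (homB x _ y (head 0 B)) ?head_in //; last by rewrite mem_cat (CZ _ (DC _ Hx)) orbT.
by apply: homD; rewrite ?(head_mem Hx) ?map_f.
Qed.

End Grouping.

Lemma sparse_omega3_pow X x y : sparse (omega_pow 3) X -> 1 < x ->
  x \in X -> y \in X -> x < y -> x ^ x.+1 <= y.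
Proof.
case/andP=> _ /allP /(_ x) Hsp le2x Hx Hy lt_xy.
have /allP /(_ y Hy) := Hsp Hx; rewrite lt_xy => /(large_omega3_iota le2x).
by rewrite subnKC // ltnW.
Qed.

Theorem mainTheorem18 (n c : nat) (X : seq nat) :
  fin_set X ->
  large (omega_pow n.+3) X ->
  sparse (omega_pow 3) X ->
  c <= minX X ->
  admits_grouping (omega_pow n) (nat_cnf c) (minX X) X.
Proof.
case: X => [|m X'] // HX HL Hsp le_cm P HP; have /andP [m_gt3 _] := Hsp.
rewrite /minX /= in m_gt3 le_cm HP *.
have m_le x : x \in m :: X' -> m <= x.
  by rewrite inE => /predU1P [->|/(allP (order_path_min ltn_trans HX)) /ltnW].
have pow_le x y : x \in m :: X' -> y \in m :: X' -> x < y -> x ^ x.+1 <= y.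
  by move=> Hx; apply: (sparse_omega3_pow Hsp _ Hx); have := m_le x Hx; lia.
have HX' : large (nseq c n.+2) X'.
  by apply: large_nseq_leq le_cm _; rewrite /= large_cons [fund _ _]/= cats0 in HL.
have m_gt1 : 1 < m by lia.
have [Bs [sizeBs HBs pw]] :=
  @blocks_exist n m P _ m_gt1 m_le pow_le HP c [:: m] X' isT HX (fun x => id) le_cm HX'.
exists Bs; apply: grouping_of_blocks pw _; last by rewrite sizeBs.
by move=> B /HBs [SB subB HB _]; split=> // x /subB; rewrite inE => ->; rewrite orbT.
Qed.
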